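(* Let $d\ge1$ and $n\ge3$ be integers and let $\mathcal{L}$ be the FTCS operator with parameter $r=1/(2d)$, i.e. $(\mathcal{L}v)(\mathbf{k})=\frac{1}{2d}\sum_{i=1}^d\big(v(\mathbf{k}+\mathbf{e}_i)+v(\mathbf{k}-\mathbf{e}_i)\big)$ for $v\in\mathbb{R}^{\mathbb{Z}_n^d}$ (indices mod $n$). Then for every entrywise nonnegative nonzero vector $\mathbf{u}\in\mathbb{R}^{\mathbb{Z}_n^d}$, $$\frac{\|\mathcal{L}\mathbf{u}\|_2^2}{\|\mathbf{u}\|_2^2}\ge\frac{1}{2d}.$$
   Context: This is the FTCS operator $\mathcal{L}=I_n^{\otimes d}+r\sum_j I_n^{\otimes(j-1)}\otimes H\otimes I_n^{\otimes(d-j)}$ ($H$ the $n\times n$ circulant with $-2$ on the diagonal and $1$ on the cyclic off-diagonals) in the case $r=\alpha\Delta t/\Delta x^2=1/(2d)$, i.e. $\Delta t=\Delta x^2/(2d\alpha)$. $\mathbf{e}_i$ is the $i$-th unit vector of $\mathbb{Z}_n^d$. *)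

From HB Require Import structures.
From mathcomp Require Import all_boot all_order all_algebra.
Set Implicit Arguments. Unset Strict Implicit. Unset Printing Implicit Defensive.
Import Order.TTheory GRing.Theory Num.Theory.
Local Open Scope ring_scope.

(* Points of the discrete torus Z_n^d : functions 'I_d -> 'I_n.
   Grid functions v : R^{Z_n^d} are functions grid d n -> R. *)
Definition grid (d n : nat) := {ffun 'I_d -> 'I_n}.

Definition addmod (n : nat) (a b : nat) : 'I_n.+1 :=
  @Ordinal n.+1 ((a + b) %% n.+1) (ltn_pmod _ (ltn0Sn n)).

(* k + s e_i (mod n), with s = 1 or s = n - 1 (i.e. -1 mod n).  Stated for
   the grid 'I_n.+1 so that the modulus is positive. *)
Definition shift (d n : nat) (k : grid d n.+1) (i : 'I_d) (s : nat)
  : grid d n.+1 :=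
  [ffun j => if j == i then addmod n (k j) s else k j].

Definition shiftP d n (k : grid d n.+1) i := shift k i 1.
Definition shiftM d n (k : grid d n.+1) i := shift k i n.

Definition FTCS {R : realFieldType} (d n : nat) (v : grid d n.+1 -> R)
  : grid d n.+1 -> R :=
  fun k => (2 * d%:R)^-1 *
    \sum_(i < d) (v (shiftP k i) + v (shiftM k i)).

Definition norm2 {R : realFieldType} (d n : nat) (v : grid d n -> R) : R :=
  \sum_(k : grid d n) v k ^+ 2.

From HB Require Import structures.
From mathcomp Require Import all_boot all_order all_algebra.
Import Order.TTheory GRing.Theory Num.Theory.
Local Open Scope ring_scope.

(* For u >= 0, (L u)(k) is (2d)^-1 times a sum of 2d nonnegative neighbour
   values u(k +- e_i); the square of a sum of nonnegative terms dominates the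
   sum of their squares, so
     (L u)(k)^2 >= (2d)^-2 * sum_i (u(k+e_i)^2 + u(k-e_i)^2).
   Summing over the torus, each translation k |-> k +- e_i is a bijection of
   Z_n^d, so every neighbour term contributes exactly ||u||^2, giving
     ||L u||^2 >= (2d)^-2 * 2d * ||u||^2 = (2d)^-1 * ||u||^2.
   Dividing by ||u||^2 > 0 yields the theorem. *)

Lemma sum_sqr_le_sqr_sum (R : realDomainType) (I : Type) (s : seq I)
    (F : I -> R) :
  (forall i, 0 <= F i) -> \sum_(i <- s) F i ^+ 2 <= (\sum_(i <- s) F i) ^+ 2.
Proof.
move=> F_ge0; elim: s => [|a s IH]; first by rewrite !big_nil expr0n.
rewrite !big_cons sqrrD -addrA lerD2l; apply: le_trans IH _.
by rewrite lerDr mulrn_wge0 // mulr_ge0 // sumr_ge0.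
Qed.

Lemma shift_inj (d n : nat) (i : 'I_d) (s : nat) :
  injective (fun k : grid d n.+1 => shift k i s).
Proof.
move=> k1 k2 /= /ffunP eq_shift; apply/ffunP => j; have := eq_shift j.
rewrite !ffunE; case: (j == i) => // /(congr1 val) /= /eqP.
by rewrite eqn_modDr !modn_small // => /eqP eq_kj; apply: val_inj.
Qed.

Lemma sum_shift (V : nmodType) (d n : nat) (i : 'I_d) (s : nat)
    (f : grid d n.+1 -> V) :
  \sum_k f (shift k i s) = \sum_k f k.
Proof. by rewrite [RHS](reindex_inj (shift_inj d n i s)). Qed.

Lemma sum_neighbour_sqr (R : realFieldType) (d n : nat)
    (u : grid d n.+1 -> R) :
  \sum_k \sum_(i < d) (u (shiftP k i) ^+ 2 + u (shiftM k i) ^+ 2)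
    = (2 * d%:R) * norm2 u.
Proof.
rewrite exchange_big /=.
under eq_bigr => i _ do
  rewrite big_split /= /shiftP /shiftM !(sum_shift _ d n i _ (fun k => u k ^+ 2)).
by rewrite sumr_const card_ord -mulr2n -mulrnA -[LHS]mulr_natl natrM.
Qed.

Lemma FTCS_sqr_ge (R : realFieldType) (d n : nat) (u : grid d n.+1 -> R)
    (u_ge0 : forall k, 0 <= u k) (k : grid d n.+1) :
  (2 * d%:R)^-1 ^+ 2 *
    \sum_(i < d) (u (shiftP k i) ^+ 2 + u (shiftM k i) ^+ 2)
  <= FTCS u k ^+ 2.
Proof.
rewrite /FTCS exprMn ler_wpM2l ?sqr_ge0 //.
have pair_ge0 i : 0 <= u (shiftP k i) + u (shiftM k i) by rewrite addr_ge0.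
refine (le_trans _ (sum_sqr_le_sqr_sum _ _ (index_enum _) _ pair_ge0)).
apply: ler_sum => i _.
by rewrite sqrrD addrAC lerDl mulrn_wge0 // mulr_ge0.
Qed.

Lemma norm2_FTCS_ge (R : realFieldType) (d n : nat) (hd : (0 < d)%N)
    (u : grid d n.+1 -> R) (u_ge0 : forall k, 0 <= u k) :
  (2 * d%:R)^-1 * norm2 u <= norm2 (FTCS u).
Proof.
have two_d_neq0 : 2 * d%:R != 0 :> R by rewrite mulf_neq0 ?pnatr_eq0 // -lt0n.
refine (le_trans _ (ler_sum _ (fun k _ => FTCS_sqr_ge _ _ _ _ u_ge0 k))).
have inv_sqr_mul : (2 * d%:R)^-1 ^+ 2 * (2 * d%:R) = (2 * d%:R)^-1 :> R.
  by rewrite expr2 -mulrA mulVf // mulr1.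
by rewrite -mulr_sumr sum_neighbour_sqr mulrA inv_sqr_mul.
Qed.

Lemma norm2_gt0 (R : realFieldType) (d n : nat) (u : grid d n -> R) :
  (exists k, u k != 0) -> 0 < norm2 u.
Proof.
case=> k0 uk0_neq0; rewrite /norm2 (bigD1 k0) //=.
have sqr_k0_gt0 : 0 < u k0 ^+ 2 by rewrite lt_def sqr_ge0 sqrf_eq0 uk0_neq0.
by rewrite ltr_pwDl // sumr_ge0 // => k _; rewrite sqr_ge0.
Qed.

(* n.+1 is the grid size; the paper's hypothesis n >= 3 is 3 <= n.+1. *)
Theorem mainTheorem4 (R : realFieldType) (d n : nat) (hd : (1 <= d)%N)
  (hn : (3 <= n.+1)%N) (u : grid d n.+1 -> R)
  (hnonneg : forall k, 0 <= u k) (hnz : exists k, u k != 0) :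
  (2 * d%:R)^-1 <= norm2 (FTCS u) / norm2 u.
Proof.
by rewrite ler_pdivlMr ?norm2_gt0 // norm2_FTCS_ge.
Qed.
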